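(* Let $(\rho,\mathbf{u},\Sigma)$ be a smooth solution on $\Omega\subset\mathbb{R}^d$, with $\rho>0$ and $\alpha>0$, of the pressureless IGR system $$\partial_t\rho+\nabla\cdot(\rho\mathbf{u})=0,\quad \partial_t(\rho\mathbf{u})+\nabla\cdot(\rho\mathbf{u}\otimes\mathbf{u}+\Sigma\,\mathbb{I})=0,$$ $$\rho^{-1}\Sigma-\alpha\nabla\cdot(\rho^{-1}\nabla\Sigma)=\alpha\big(\mathrm{tr}^2(\nabla\mathbf{u})+\mathrm{tr}((\nabla\mathbf{u})^2)\big).$$ Then $K_E=\frac12\rho\big(|\mathbf{u}|^2+\alpha(\nabla\cdot\mathbf{u})^2\big)$ satisfies $$\partial_t K_E+\nabla\cdot\big((K_E+\Sigma)\mathbf{u}\big)=\alpha\,\rho\,(\nabla\cdot\mathbf{u})^3.$$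
   Context: $\nabla\mathbf{u}$ is the velocity gradient matrix, $\mathrm{tr}^2(\cdot)=(\mathrm{tr}(\cdot))^2$, $\mathbb{I}$ the identity matrix, and $(\nabla\cdot(\mathbf{a}\otimes\mathbf{b}))_i=\sum_j\partial_j(a_ib_j)$. *)

From HB Require Import structures.
From mathcomp Require Import all_boot all_order all_algebra.
From mathcomp Require Import all_classical all_reals all_analysis.
Set Implicit Arguments. Unset Strict Implicit. Unset Printing Implicit Defensive.
Import Order.TTheory GRing.Theory Num.Theory.
Import numFieldNormedType.Exports.
Local Open Scope classical_set_scope.
Local Open Scope ring_scope.

Section IGR.
Variables (R : realType) (d : nat).

Definition dt (f : R -> 'rV[R]_d -> R) (t : R) (x : 'rV[R]_d) : R :=
  derive1 (fun s => f s x) t.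

Definition dx (j : 'I_d) (f : R -> 'rV[R]_d -> R) (t : R) (x : 'rV[R]_d) : R :=
  'D_(delta_mx 0 j) (f t) x.

Definition gradu (u : R -> 'rV[R]_d -> 'rV[R]_d) (t : R) (x : 'rV[R]_d)
  : 'M[R]_d := \matrix_(i, j) dx j (fun s y => u s y 0 i) t x.

Definition divu (u : R -> 'rV[R]_d -> 'rV[R]_d) (t : R) (x : 'rV[R]_d) : R :=
  \sum_(j < d) dx j (fun s y => u s y 0 j) t x.

(* spacetime points z = (t, x) in R^(1+d) *)
Definition uncurry (f : R -> 'rV[R]_d -> R) (z : 'rV[R]_(1 + d)) : R :=
  f (lsubmx z 0 0) (rsubmx z).

Definition stdom (I : set R) (Om : set 'rV[R]_d) : set 'rV[R]_(1 + d) :=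
  [set z | I (lsubmx z 0 0) /\ Om (rsubmx z)].

End IGR.

Definition ipartial (R : realType) (n : nat) (l : seq 'I_n)
  (g : 'rV[R]_n -> R) : 'rV[R]_n -> R :=
  foldr (fun i h => fun z => 'D_(delta_mx 0 i) h z) g l.

Definition smooth_on (R : realType) (n : nat) (D : set 'rV[R]_n)
  (g : 'rV[R]_n -> R) : Prop :=
  forall (l : seq 'I_n) (z : 'rV[R]_n), D z -> differentiable (ipartial l g) z.

From HB Require Import structures.
From mathcomp Require Import all_boot all_order all_algebra.
From mathcomp Require Import all_classical all_reals all_analysis.
From mathcomp Require Import ring lra.
Import Order.TTheory GRing.Theory Num.Theory.
Import numFieldNormedType.Exports.
Local Open Scope classical_set_scope.
Local Open Scope ring_scope.

(* In spacetime coordinates z = (t, x) write D_t f = d_t f + u . grad f for the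
   material derivative.  Subtracting u_i times the mass equation from the i-th
   momentum equation and dividing by rho gives D_t u_i = - rho^-1 d_i Sigma.
   Differentiating this in x_i, summing over i and using the symmetry of second
   derivatives gives D_t (div u) = - tr((grad u)^2) - sum_i d_i (rho^-1 d_i Sigma),
   which the IGR equation turns into alpha D_t (div u) = alpha (div u)^2 - rho^-1 Sigma.
   By the product rule, d_t K_E + div((K_E + Sigma) u) is a multiple of the mass
   equation plus rho (u . D_t u + alpha div u D_t (div u)) + u . grad Sigma
   + Sigma div u, and the last three terms add up to alpha rho (div u)^3. *)

Section LineDerivative.
Context {R : realType}.

Lemma derive_line_eq {V V' W : normedModType R} [f : V -> W] [g : V' -> W] [a v b w] :
  (forall h : R, f (h *: v + a) = g (h *: w + b)) -> 'D_v f a = 'D_w g b.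
Proof.
move=> fg; have fagb : f a = g b by have := fg 0; rewrite !scale0r !add0r.
rewrite /derive; suff -> : (fun h : R => h^-1 *: ((f \o shift a) (h *: v) - f a)) =
  (fun h : R => h^-1 *: ((g \o shift b) (h *: w) - g b)) by [].
by apply: funext => h /=; rewrite fagb fg.
Qed.

Lemma derivable_line_eq {V V' W : normedModType R} [f : V -> W] [g : V' -> W] [a v b w] :
  (forall h : R, f (h *: v + a) = g (h *: w + b)) ->
  derivable f a v -> derivable g b w.
Proof.
move=> fg; have fagb : f a = g b by have := fg 0; rewrite !scale0r !add0r.
rewrite /derivable.
suff -> : (fun h : R => h^-1 *: ((f \o shift a) (h *: v) - f a)) =
  (fun h : R => h^-1 *: ((g \o shift b) (h *: w) - g b)) by [].
by apply: funext => h /=; rewrite fagb fg.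
Qed.

Lemma is_derive_line {V : normedModType R} (F : V -> R) (p a : V) (s : R) :
  differentiable F (s *: a + p) ->
  is_derive s 1 (fun h => F (h *: a + p)) ('D_a F (s *: a + p)).
Proof.
move=> dF; have shift_line h : F (h *: a + (s *: a + p)) = F ((h *: 1 + s) *: a + p).
  by rewrite [h *: 1]mulr1 scalerDl addrA.
split; last exact: esym (derive_line_eq shift_line).
have dFa : derivable F (s *: a + p) a by exact: diff_derivable.
exact: (derivable_line_eq shift_line dFa).
Qed.

End LineDerivative.

Section MixedPartials.
Context {R : realType} {V : normedModType R}.

Lemma differentiable_remainder_le [f : V -> R] [x eps] :
  differentiable f x -> 0 < eps ->
  exists2 del, 0 < del & forall w, `|w| < del ->
    `|f (w + x) - f x - 'd f x w| <= eps * `|w|.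
Proof.
move=> /diff_locally /eqaddoP fo /fo /nbhs_normP [del del0 Hdel].
exists del => // w wdel; have := Hdel w; rewrite /= sub0r normrN => /(_ wdel).
by rewrite /= /shift opprD addrA.
Qed.

Lemma norm_segment_le (a b : V) c h : 0 <= c <= h ->
  `|c *: a + h *: b| <= h * (`|a| + `|b|) /\ `|c *: a| <= h * `|a|.
Proof.
move=> /andP[c0 ch]; have h0 := le_trans c0 ch.
have ca : `|c *: a| <= h * `|a| by rewrite normrZ ger0_norm // ler_wpM2r.
split=> //; rewrite mulrDr (le_trans (ler_normD _ _)) // lerD //.
by rewrite normrZ ger0_norm.
Qed.

Lemma second_difference_mvt [F : V -> R] [z a b r h] :
  0 < h -> h * (`|a| + `|b|) < r ->
  (forall w, `|w| < r -> differentiable F (w + z)) ->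
  exists2 c, 0 < c < h &
    F (h *: a + h *: b + z) - F (h *: a + z) - F (h *: b + z) + F z
    = h * ('D_a F (c *: a + h *: b + z) - 'D_a F (c *: a + z)).
Proof.
move=> h0 hr dF.
have in_ball c : 0 <= c <= h -> `|c *: a + h *: b| < r /\ `|c *: a| < r.
  move=> /(norm_segment_le a b)[ab a_]; split; apply: le_lt_trans hr => //.
  by rewrite (le_trans a_) // ler_pM2l // lerDl.
pose g s := F (s *: a + (h *: b + z)) - F (s *: a + z).
have dg c : 0 <= c <= h ->
    is_derive c 1 g ('D_a F (c *: a + (h *: b + z)) - 'D_a F (c *: a + z)).
  move=> /in_ball[rb ra]; apply: is_deriveB; apply: is_derive_line.
    by rewrite addrA; exact: dF.
  exact: dF.
have [x||c cin gmvt] :=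
  @MVT R g (fun c => 'D_a F (c *: a + (h *: b + z)) - 'D_a F (c *: a + z)) 0 h h0.
- by rewrite in_itv => /andP[x0 xh]; apply: dg; rewrite !ltW.
- apply: continuous_in_subspaceT => x; rewrite inE /= in_itv /= => hx.
  by have [dgx _] := dg x hx; apply/differentiable_continuous/derivable1_diffP.
move: cin; rewrite in_itv /= => /andP[c0 ch].
exists c; first by rewrite c0.
rewrite subr0 !addrA in gmvt.
by rewrite mulrC -gmvt /g !scale0r !add0r addrA; ring.
Qed.

Lemma second_difference_approx [F : V -> R] [z a b r eps h] :
  0 <= eps -> 0 < h -> h * (`|a| + `|b|) < r ->
  (forall w, `|w| < r -> differentiable F (w + z)) ->
  (forall w, `|w| < r ->
     `|'D_a F (w + z) - 'D_a F z - 'd ('D_a F) z w| <= eps * `|w|) ->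
  `|F (h *: a + h *: b + z) - F (h *: a + z) - F (h *: b + z) + F z
     - h ^+ 2 * 'd ('D_a F) z b| <= eps * (h ^+ 2 * (2 * `|a| + `|b|)).
Proof.
move=> eps0 h0 hr dF rem.
have [c /andP[c0 ch] ->] := second_difference_mvt h0 hr dF.
have /(norm_segment_le a b)[w1_le w2_le] : 0 <= c <= h by rewrite !ltW.
have w2_lt : `|c *: a| < r.
  by rewrite (le_lt_trans w2_le) // (le_lt_trans _ hr) // ler_pM2l // lerDl.
have := rem _ (le_lt_trans w1_le hr); have := rem _ w2_lt.
set X1 := 'D_a F (c *: a + h *: b + z) - _ - _; set X2 := 'D_a F (c *: a + z) - _ - _.
move=> X2_le X1_le.
have -> : h * ('D_a F (c *: a + h *: b + z) - 'D_a F (c *: a + z))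
    - h ^+ 2 * 'd ('D_a F) z b = h * (X1 - X2).
  rewrite /X1 /X2; have -> : 'd ('D_a F) z (c *: a + h *: b)
           = 'd ('D_a F) z (c *: a) + h * 'd ('D_a F) z b.
    by rewrite linearD; congr (_ + _); rewrite linearZ.
  ring.
rewrite normrM gtr0_norm //.
have X12 : `|X1 - X2| <= eps * (h * (2 * `|a| + `|b|)).
  apply: (le_trans (ler_normB _ _)).
  have := ler_wpM2l eps0 w1_le; have := ler_wpM2l eps0 w2_le; lra.
rewrite [X in _ <= X](_ : _ = h * (eps * (h * (2 * `|a| + `|b|)))); last by ring.
by rewrite ler_pM2l.
Qed.

Lemma norm_sub_le_common_approx [x c1 c2 p e1 e2 : R] : 0 < p ->
  `|x - p * c1| <= e1 -> `|x - p * c2| <= e2 -> `|c1 - c2| <= (e1 + e2) / p.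
Proof.
move=> p0 le1 le2; rewrite ler_pdivlMr // mulrC -[p]gtr0_norm // -normrM.
have -> : p * (c1 - c2) = (x - p * c2) - (x - p * c1) by ring.
by rewrite (le_trans (ler_normB _ _)) // addrC lerD.
Qed.

(* Both sides are limits of h^-2 times the same second difference
   F (z + h a + h b) - F (z + h a) - F (z + h b) + F z. *)
Lemma derive_comm (F : V -> R) z a b :
  (\forall w \near z, differentiable F w) ->
  differentiable ('D_a F) z -> differentiable ('D_b F) z ->
  'D_b ('D_a F) z = 'D_a ('D_b F) z.
Proof.
move=> /nbhs_normP[r r0 dFr] da db; rewrite (deriveE b da) (deriveE a db).
have dF w : `|w| < r -> differentiable F (w + z).
  by move=> wr; apply: dFr; rewrite /ball_ /= opprD addrCA subrr addr0 normrN.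
apply/eqP; rewrite -subr_eq0 -normr_le0; apply/ler_addgt0Pr => eps eps0.
rewrite add0r; set N := `|a| + `|b|.
have N0 : 0 <= N by rewrite addr_ge0.
pose e := eps / (3 * N + 1); have e0 : 0 < e by rewrite divr_gt0 // ltr_wpDl ?mulr_ge0.
have [ra ra0 rema] := differentiable_remainder_le da e0.
have [rb rb0 remb] := differentiable_remainder_le db e0.
pose r' := Num.min r (Num.min ra rb).
have r'0 : 0 < r' by rewrite !lt_min r0 ra0 rb0.
have [r'r r'a r'b] : [/\ r' <= r, r' <= ra & r' <= rb].
  by split; rewrite !ge_min lexx ?orbT.
pose h := r' / (N + 1); have h0 : 0 < h by rewrite divr_gt0 // ltr_wpDl.
have hN : h * N < r'.
  by rewrite /h mulrAC ltr_pdivrMr ?ltr_wpDl // ltr_pM2l // ltrDl.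
have dF' w : `|w| < r' -> differentiable F (w + z).
  by move=> wr; apply/dF/(lt_le_trans wr).
have Aa := second_difference_approx (ltW e0) h0 hN dF'
  (fun w wr => rema w (lt_le_trans wr r'a)).
have hN' : h * (`|b| + `|a|) < r' by rewrite addrC.
have Ab := second_difference_approx (ltW e0) h0 hN' dF'
  (fun w wr => remb w (lt_le_trans wr r'b)).
rewrite [h *: b + h *: a]addrC in Ab.
rewrite [F (h *: a + h *: b + z) - _ - _]addrAC in Ab.
apply: le_trans (norm_sub_le_common_approx (exprn_gt0 2 h0) Aa Ab) _.
have -> : (e * (h ^+ 2 * (2 * `|a| + `|b|)) + e * (h ^+ 2 * (2 * `|b| + `|a|)))
    / h ^+ 2 = e * (3 * N) by rewrite /N; field; rewrite gt_eqF.
rewrite /e mulrAC ler_pdivrMr ?ltr_wpDl ?mulr_ge0 // ler_pM2l //.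
by rewrite /N; lra.
Qed.

End MixedPartials.

Section DifferentiableRules.
Context {R : realType} {V : normedModType R}.
Implicit Types (f g : V -> R) (x v : V).

Lemma differentiable_mulf [f g x] : differentiable f x -> differentiable g x ->
  differentiable (fun y => f y * g y) x.
Proof. exact: differentiableM. Qed.

Lemma differentiable_sqrf [f x] : differentiable f x ->
  differentiable (fun y => f y ^+ 2) x.
Proof. by move=> df; under eq_fun do rewrite expr2; exact: differentiable_mulf. Qed.

Lemma derive_mulf [f g x v] : differentiable f x -> differentiable g x ->
  'D_v (fun y => f y * g y) x = 'D_v f x * g x + f x * 'D_v g x.
Proof.
move=> df dg; rewrite (deriveM (diff_derivable (v := v) df) (diff_derivable (v := v) dg)).
by rewrite addrC mulrC.
Qed.

Lemma derive_addf [f g x v] : differentiable f x -> differentiable g x ->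
  'D_v (fun y => f y + g y) x = 'D_v f x + 'D_v g x.
Proof.
by move=> df dg; apply: (deriveD (diff_derivable (v := v) df) (diff_derivable (v := v) dg)).
Qed.

Lemma derive_oppf [f x v] : differentiable f x ->
  'D_v (fun y => - f y) x = - 'D_v f x.
Proof. by move=> df; apply: (deriveN (diff_derivable (v := v) df)). Qed.

Lemma derive_scalef (c : R) [f x v] : differentiable f x ->
  'D_v (fun y => c * f y) x = c * 'D_v f x.
Proof. by move=> df; apply: (deriveMl c (diff_derivable (v := v) df)). Qed.

Lemma derive_sqrf [f x v] : differentiable f x ->
  'D_v (fun y => f y ^+ 2) x = 2 * f x * 'D_v f x.
Proof.
move=> df; under eq_fun do rewrite expr2.
by rewrite derive_mulf //; ring.
Qed.

Lemma derive_sumf [k] [f : 'I_k -> V -> R] [x v] :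
  (forall i, differentiable (f i) x) ->
  'D_v (fun y => \sum_(i < k) f i y) x = \sum_(i < k) 'D_v (f i) x.
Proof.
by move=> df; rewrite -(derive_sum (fun i => diff_derivable (v := v) (df i))) fct_sumE.
Qed.

Lemma differentiable_sumf [k] [f : 'I_k -> V -> R] [x] :
  (forall i, differentiable (f i) x) ->
  differentiable (fun y => \sum_(i < k) f i y) x.
Proof. by move=> df; rewrite -fct_sumE; apply: differentiable_sum. Qed.

End DifferentiableRules.

(* Pointwise algebra of the conservation laws: p, pt, pj stand for rho, d_t rho,
   d_j rho at a point; u, ut, uij for u_i, d_t u_i, d_j u_i; s, sj for Sigma,
   d_j Sigma; Dv, Dt, Dj for div u, d_t div u, d_j div u. *)
Section ConservationAlgebra.
Context {R : numFieldType} {k : nat}.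
Implicit Types (p pt s : R) (u pj sj : 'I_k -> R).

Lemma sum_kronecker (i : 'I_k) (f : 'I_k -> R) :
  \sum_(j < k) (i == j)%:R * f j = f i.
Proof.
rewrite (bigD1 i) //= eqxx mul1r big1 ?addr0 // => j.
by rewrite eq_sym => /negbTE ->; rewrite mul0r.
Qed.

Lemma momentum_velocity_alg (i : 'I_k) p pt pj sj (ui uit : R)
  (uj ujj uij : 'I_k -> R) :
  p != 0 ->
  pt + \sum_(j < k) (pj j * uj j + p * ujj j) = 0 ->
  pt * ui + p * uit + \sum_(j < k) ((pj j * ui + p * uij j) * uj j
      + p * ui * ujj j + (i == j)%:R * sj j) = 0 ->
  uit + \sum_(j < k) uj j * uij j = - (p^-1 * sj i).
Proof.
move=> p0 mass; have -> : \sum_(j < k) ((pj j * ui + p * uij j) * uj j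
      + p * ui * ujj j + (i == j)%:R * sj j) =
   ui * \sum_(j < k) (pj j * uj j + p * ujj j) + p * \sum_(j < k) uj j * uij j + sj i.
  rewrite big_split /= sum_kronecker; congr (_ + _).
  by rewrite !mulr_sumr -big_split; apply: eq_bigr => j _ /=; ring.
have -> : \sum_(j < k) (pj j * uj j + p * ujj j) = - pt.
  by apply/eqP; rewrite -addr_eq0 addrC mass.
set S := \sum_(j < k) uj j * uij j => mom.
apply: (mulfI p0); rewrite mulrN mulrA mulfV // mul1r.
by apply/eqP; rewrite -subr_eq0 -mom; apply/eqP; ring.
Qed.

Lemma energy_balance_alg (al p pt s Dv Dt : R) u pj sj (ut Dj : 'I_k -> R)
  (uij : 'I_k -> 'I_k -> R) :
  p != 0 -> Dv = \sum_(j < k) uij j j ->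
  pt + \sum_(j < k) (pj j * u j + p * uij j j) = 0 ->
  (forall i, ut i + \sum_(j < k) u j * uij i j = - (p^-1 * sj i)) ->
  al * (Dt + \sum_(j < k) u j * Dj j) = al * Dv ^+ 2 - p^-1 * s ->
  2^-1 * pt * (\sum_(i < k) u i ^+ 2 + al * Dv ^+ 2)
  + 2^-1 * p * (\sum_(i < k) 2 * u i * ut i + al * (2 * Dv * Dt))
  + \sum_(j < k) ((2^-1 * pj j * (\sum_(i < k) u i ^+ 2 + al * Dv ^+ 2)
        + 2^-1 * p * (\sum_(i < k) 2 * u i * uij i j + al * (2 * Dv * Dj j)) + sj j) * u j
      + (2^-1 * p * (\sum_(i < k) u i ^+ 2 + al * Dv ^+ 2) + s) * uij j j)
  = al * p * Dv ^+ 3.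
Proof.
move=> p0 divE mass vel div.
set A := \sum_(i < k) u i ^+ 2 + al * Dv ^+ 2.
set SS := \sum_(i < k) u i * \sum_(j < k) u j * uij i j.
set W := \sum_(i < k) sj i * u i.
set Z := \sum_(j < k) u j * Dj j.
have uut : \sum_(i < k) 2 * u i * ut i = - 2 * SS - 2 * p^-1 * W.
  transitivity (\sum_(i < k) (- 2 * (u i * \sum_(j < k) u j * uij i j)
                               + (- 2 * p^-1) * (sj i * u i))).
    apply: eq_bigr => i _.
    by rewrite -[ut i](addrK (\sum_(j < k) u j * uij i j)) vel; ring.
  by rewrite big_split /= -!mulr_sumr /SS /W; ring.
have flux : \sum_(j < k) ((2^-1 * pj j * A
        + 2^-1 * p * (\sum_(i < k) 2 * u i * uij i j + al * (2 * Dv * Dj j)) + sj j) * u j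
      + (2^-1 * p * A + s) * uij j j)
  = 2^-1 * A * \sum_(j < k) (pj j * u j + p * uij j j)
    + p * SS + p * Dv * al * Z + W + s * Dv.
  have -> : SS = \sum_(j < k) u j * \sum_(i < k) u i * uij i j.
    rewrite /SS; under eq_bigr do rewrite mulr_sumr.
    rewrite exchange_big /=; apply: eq_bigr => j _; rewrite mulr_sumr.
    by apply: eq_bigr => i _; ring.
  rewrite /W /Z [X in s * X]divE [2^-1 * A * _]mulr_sumr [p * \sum_(j < k) _]mulr_sumr.
  rewrite [p * Dv * al * _]mulr_sumr [s * _]mulr_sumr -!big_split /=.
  apply: eq_bigr => j _.
  have -> : \sum_(i < k) 2 * u i * uij i j = 2 * \sum_(i < k) u i * uij i j.
    by rewrite mulr_sumr; apply: eq_bigr => i _; rewrite mulrA.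
  by field.
have -> : al * (2 * Dv * Dt) = 2 * Dv * (al * (Dt + Z)) - 2 * Dv * (al * Z) by ring.
rewrite flux uut div (_ : pt = - \sum_(j < k) (pj j * u j + p * uij j j)); last first.
  by apply/eqP; rewrite -addr_eq0 mass.
by field.
Qed.

End ConservationAlgebra.

Section Spacetime.
Context {R : realType} {d : nat}.
Local Notation ST := 'rV[R]_(1 + d).

Definition tdir : ST := delta_mx 0 (lshift d ord0).
Definition xdir (j : 'I_d) : ST := delta_mx 0 (rshift 1 j).

Definition material_derive (U : 'I_d -> ST -> R) (f : ST -> R) (z : ST) : R :=
  'D_tdir f z + \sum_(j < d) U j z * 'D_(xdir j) f z.

Definition divergence (U : 'I_d -> ST -> R) (z : ST) : R :=
  \sum_(i < d) 'D_(xdir i) (U i) z.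

Lemma uncurryM (f g : R -> 'rV[R]_d -> R) :
  uncurry (fun s y => f s y * g s y) = (fun z => uncurry f z * uncurry g z).
Proof. by []. Qed.

Lemma uncurryD (f g : R -> 'rV[R]_d -> R) :
  uncurry (fun s y => f s y + g s y) = (fun z => uncurry f z + uncurry g z).
Proof. by []. Qed.

Lemma uncurryMl (c : R) (f : R -> 'rV[R]_d -> R) :
  uncurry (fun s y => c * f s y) = (fun z => c * uncurry f z).
Proof. by []. Qed.

Lemma dt_uncurry (f : R -> 'rV[R]_d -> R) (z : ST) :
  dt f (lsubmx z 0 0) (rsubmx z) = 'D_tdir (uncurry f) z.
Proof.
rewrite /dt derive1E; apply: derive_line_eq => h; congr f.
- by rewrite !mxE /= mulr1 [h *: 1]mulr1.
- by apply/rowP => k; rewrite !mxE /= mulr0 add0r.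
Qed.

Lemma dx_uncurry (j : 'I_d) (f : R -> 'rV[R]_d -> R) (z : ST) :
  dx j f (lsubmx z 0 0) (rsubmx z) = 'D_(xdir j) (uncurry f) z.
Proof.
apply: derive_line_eq => h; congr f.
- by rewrite !mxE /= mulr0 add0r.
- by apply/rowP => k; rewrite !mxE /= (inj_eq (@rshift_inj _ _)).
Qed.

Lemma open_stdom [I : set R] [Om : set 'rV[R]_d] :
  open I -> open Om -> open (stdom I Om).
Proof.
move=> oI oOm; apply: openI; apply: open_comp => // z _.
  exact: continuous_comp (@continuous_lsubmx R 1 1 d z) (@coord_continuous R 1 1 0 0 _).
exact: continuous_rsubmx.
Qed.

End Spacetime.

Section SmoothOn.
Context {R : realType} {n : nat} {D : set 'rV[R]_n} {g : 'rV[R]_n -> R}.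
Hypothesis g_smooth : smooth_on D g.

Lemma smooth_on_differentiable z : D z -> differentiable g z.
Proof. exact: (g_smooth [::] z). Qed.

Lemma smooth_on_differentiable_derive k z : D z ->
  differentiable ('D_(delta_mx 0 k) g) z.
Proof. exact: (g_smooth [:: k] z). Qed.

Lemma smooth_on_derive_comm k l z : open D -> D z ->
  'D_(delta_mx 0 k) ('D_(delta_mx 0 l) g) z
  = 'D_(delta_mx 0 l) ('D_(delta_mx 0 k) g) z.
Proof.
move=> oD Dz; apply: derive_comm; last 2 first.
- exact: smooth_on_differentiable_derive.
- exact: smooth_on_differentiable_derive.
move: Dz; rewrite openE in oD => /oD.
by apply: filterS => w; apply: smooth_on_differentiable.
Qed.

End SmoothOn.

Section PressurelessIGR.
Context {R : realType} {d : nat} {I : set R} {Om : set 'rV[R]_d} {alpha : R}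
  {rho Sig : R -> 'rV[R]_d -> R} {u : R -> 'rV[R]_d -> 'rV[R]_d}.

Local Notation D := (stdom I Om).
Local Notation P := (uncurry rho).
Local Notation S := (uncurry Sig).
Local Notation U i := (uncurry (fun s y => u s y 0 i)).
Local Notation divU := (divergence (fun i => U i)).

Hypothesis open_D : open D.
Hypothesis rho_smooth : smooth_on D P.
Hypothesis Sig_smooth : smooth_on D S.
Hypothesis u_smooth : forall i, smooth_on D (U i).
Hypothesis rho_gt0 : forall t x, I t -> Om x -> 0 < rho t x.
Hypothesis mass : forall t x, I t -> Om x ->
  dt rho t x + \sum_(j < d) dx j (fun s y => rho s y * u s y 0 j) t x = 0.
Hypothesis momentum : forall t x, I t -> Om x -> forall i : 'I_d,
  dt (fun s y => rho s y * u s y 0 i) t x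
  + \sum_(j < d) dx j (fun s y => rho s y * u s y 0 i * u s y 0 j
                                   + (i == j)%:R * Sig s y) t x = 0.
Hypothesis igr : forall t x, I t -> Om x ->
  (rho t x)^-1 * Sig t x
  - alpha * \sum_(j < d) dx j (fun s y => (rho s y)^-1 * dx j Sig s y) t x
  = alpha * ((\tr (gradu u t x)) ^+ 2 + \tr (gradu u t x *m gradu u t x)).

Let dP := smooth_on_differentiable rho_smooth.
Let dS := smooth_on_differentiable Sig_smooth.
Let dU i := smooth_on_differentiable (u_smooth i).
Let dU' i k := smooth_on_differentiable_derive (u_smooth i) k.
Let dS' k := smooth_on_differentiable_derive Sig_smooth k.

Lemma density_neq0 [z] : D z -> P z != 0.
Proof. by case=> It Ox; rewrite gt_eqF // rho_gt0. Qed.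

Lemma mass_spacetime [z] (Dz : D z) : 'D_tdir P z
  + \sum_(j < d) ('D_(xdir j) P z * U j z + P z * 'D_(xdir j) (U j) z) = 0.
Proof.
case: (Dz) => It Ox; rewrite -[RHS](mass _ _ It Ox) dt_uncurry; congr (_ + _).
by apply: eq_bigr => j _; rewrite dx_uncurry uncurryM (derive_mulf (dP z Dz) (dU j z Dz)).
Qed.

Lemma momentum_spacetime [z] (Dz : D z) i :
  'D_tdir P z * U i z + P z * 'D_tdir (U i) z
  + \sum_(j < d) ((('D_(xdir j) P z * U i z + P z * 'D_(xdir j) (U i) z) * U j z
     + P z * U i z * 'D_(xdir j) (U j) z) + (i == j)%:R * 'D_(xdir j) S z) = 0.
Proof.
case: (Dz) => It Ox; rewrite -[RHS](momentum _ _ It Ox i) dt_uncurry uncurryM.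
rewrite (derive_mulf (dP z Dz) (dU i z Dz)); congr (_ + _); apply: eq_bigr => j _.
have dPU := differentiable_mulf (dP z Dz) (dU i z Dz).
rewrite dx_uncurry uncurryD uncurryMl !uncurryM.
have dcS := differentiable_mulf (differentiable_cst ((i == j)%:R : R) z) (dS z Dz).
rewrite (derive_addf (differentiable_mulf dPU (dU j z Dz)) dcS) (derive_mulf dPU (dU j z Dz)).
by rewrite (derive_mulf (dP z Dz) (dU i z Dz)) (derive_scalef _ (dS z Dz)).
Qed.

Lemma velocity_transport [z] (Dz : D z) i :
  material_derive (fun i => U i) (U i) z = - ((P z)^-1 * 'D_(xdir i) S z).
Proof.
exact: momentum_velocity_alg (density_neq0 Dz) (mass_spacetime Dz)
  (momentum_spacetime Dz i).
Qed.

Lemma derive_velocity_transport [z] (Dz : D z) k i :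
  'D_(xdir k) ('D_tdir (U i)) z =
  - (\sum_(j < d) ('D_(xdir k) (U j) z * 'D_(xdir j) (U i) z
                  + U j z * 'D_(xdir k) ('D_(xdir j) (U i)) z)
     + 'D_(xdir k) (fun w => (P w)^-1 * 'D_(xdir i) S w) z).
Proof.
pose F1 w := \sum_(j < d) U j w * 'D_(xdir j) (U i) w.
pose F2 w := (P w)^-1 * 'D_(xdir i) S w.
have near_D : \forall w \near z, D w by move: open_D; rewrite openE => /(_ z Dz).
rewrite (@near_eq_derive _ _ _ _ (fun w => - (F1 w + F2 w))); last first.
  apply: filterS near_D => w Dw.
  by rewrite opprD -(velocity_transport Dw i) addrC addrK.
have dF1 : differentiable F1 z.
  by apply: differentiable_sumf => j; apply: differentiable_mulf (dU j z Dz) (dU' i _ z Dz).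
have dF2 : differentiable F2 z.
  apply: differentiable_mulf (dS' _ z Dz).
  exact: differentiableV (dP z Dz) (density_neq0 Dz).
rewrite (derive_oppf (differentiableD dF1 dF2)) (derive_addf dF1 dF2).
rewrite (derive_sumf (fun j => differentiable_mulf (dU j z Dz) (dU' i _ z Dz))).
congr (- (_ + _)); apply: eq_bigr => j _.
by rewrite (derive_mulf (dU j z Dz) (dU' i _ z Dz)).
Qed.

Lemma divergence_transport [z] (Dz : D z) :
  material_derive (fun i => U i) divU z =
  - (\sum_(i < d) \sum_(j < d) 'D_(xdir i) (U j) z * 'D_(xdir j) (U i) z)
  - \sum_(i < d) 'D_(xdir i) (fun w => (P w)^-1 * 'D_(xdir i) S w) z.
Proof.
have comm i k l := smooth_on_derive_comm (u_smooth i) k l z open_D Dz.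
rewrite /material_derive /divergence (derive_sumf (fun i => dU' i _ z Dz)).
under eq_bigr => i _ do rewrite comm derive_velocity_transport //.
under [X in _ + X]eq_bigr => j _ do rewrite (derive_sumf (fun i => dU' i _ z Dz)).
have -> : \sum_(j < d) U j z * \sum_(i < d) 'D_(xdir j) ('D_(xdir i) (U i)) z
    = \sum_(i < d) \sum_(j < d) U j z * 'D_(xdir i) ('D_(xdir j) (U i)) z.
  rewrite exchange_big /=; apply: eq_bigr => j _; rewrite mulr_sumr.
  by apply: eq_bigr => i _; rewrite comm.
under eq_bigr => i _ do rewrite big_split /=.
by rewrite sumrN !big_split /=; ring.
Qed.

Lemma igr_spacetime [z] (Dz : D z) :
  (P z)^-1 * S z
  - alpha * \sum_(i < d) 'D_(xdir i) (fun w => (P w)^-1 * 'D_(xdir i) S w) z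
  = alpha * (divU z ^+ 2
             + \sum_(i < d) \sum_(j < d) 'D_(xdir i) (U j) z * 'D_(xdir j) (U i) z).
Proof.
have trE : \tr (gradu u (lsubmx z 0 0) (rsubmx z)) = divU z.
  by apply: eq_bigr => i _; rewrite mxE dx_uncurry.
have tr2E : \tr (gradu u (lsubmx z 0 0) (rsubmx z) *m gradu u (lsubmx z 0 0) (rsubmx z))
    = \sum_(i < d) \sum_(j < d) 'D_(xdir i) (U j) z * 'D_(xdir j) (U i) z.
  apply: eq_bigr => i _; rewrite mxE; apply: eq_bigr => j _.
  by rewrite mxE [gradu _ _ _ j i]mxE !dx_uncurry mulrC.
have sumE : \sum_(i < d) dx i (fun s y => (rho s y)^-1 * dx i Sig s y)
      (lsubmx z 0 0) (rsubmx z)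
    = \sum_(i < d) 'D_(xdir i) (fun w => (P w)^-1 * 'D_(xdir i) S w) z.
  apply: eq_bigr => i _; rewrite dx_uncurry.
  have -> : uncurry (fun s y => (rho s y)^-1 * dx i Sig s y)
      = (fun w => (P w)^-1 * 'D_(xdir i) S w).
    by apply: funext => w; rewrite /uncurry dx_uncurry.
  done.
rewrite -[X in _ - alpha * X]sumE -[X in alpha * (_ + X)]tr2E.
rewrite -[X in alpha * (X ^+ 2 + _)]trE.
by case: Dz => It Ox; exact: igr.
Qed.

Lemma igr_divergence_transport [z] (Dz : D z) :
  alpha * material_derive (fun i => U i) divU z = alpha * divU z ^+ 2 - (P z)^-1 * S z.
Proof.
rewrite divergence_transport //.
set T := \sum_(i < d) \sum_(j < d) _; set Q := \sum_(i < d) _.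
by rewrite -[(P z)^-1 * S z](subrK (alpha * Q)) igr_spacetime // -/T; ring.
Qed.

Local Notation KEst :=
  (fun w => 2^-1 * P w * (\sum_(i < d) U i w ^+ 2 + alpha * divU w ^+ 2)).

Lemma differentiable_divergence [z] : D z -> differentiable divU z.
Proof. by move=> Dz; apply: differentiable_sumf => i; apply: dU'. Qed.

Lemma differentiable_kinetic_energy [z] : D z -> differentiable KEst z.
Proof.
move=> Dz; apply: differentiable_mulf.
  exact: differentiable_mulf (differentiable_cst (2^-1 : R) z) (dP z Dz).
apply: differentiableD.
  exact: differentiable_sumf (fun i => differentiable_sqrf (dU i z Dz)).
apply: differentiable_mulf (differentiable_cst alpha z) _.
exact: differentiable_sqrf (differentiable_divergence Dz).
Qed.

Lemma derive_kinetic_energy [z] (Dz : D z) v :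
  'D_v KEst z = 2^-1 * 'D_v P z * (\sum_(i < d) U i z ^+ 2 + alpha * divU z ^+ 2)
  + 2^-1 * P z * (\sum_(i < d) 2 * U i z * 'D_v (U i) z
                  + alpha * (2 * divU z * 'D_v divU z)).
Proof.
have dPh := differentiable_mulf (differentiable_cst (2^-1 : R) z) (dP z Dz).
have dU2 i := differentiable_sqrf (dU i z Dz).
have dsq := differentiable_sumf dU2.
have ddiv := differentiable_divergence Dz.
have dadiv := differentiable_mulf (differentiable_cst alpha z) (differentiable_sqrf ddiv).
rewrite (derive_mulf dPh (differentiableD dsq dadiv)) (derive_scalef _ (dP z Dz)).
rewrite (derive_addf dsq dadiv) (derive_sumf dU2).
rewrite (derive_scalef _ (differentiable_sqrf ddiv)) (derive_sqrf ddiv).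
by congr (_ + _ * (_ + _)); apply: eq_bigr => i _; rewrite (derive_sqrf (dU i z Dz)).
Qed.

Lemma kinetic_energy_balance [z] (Dz : D z) :
  let KE := fun s y => 2^-1 * rho s y *
              (\sum_(i < d) (u s y 0 i) ^+ 2 + alpha * (divu u s y) ^+ 2) in
  dt KE (lsubmx z 0 0) (rsubmx z)
  + \sum_(j < d) dx j (fun s y => (KE s y + Sig s y) * u s y 0 j)
      (lsubmx z 0 0) (rsubmx z)
  = alpha * rho (lsubmx z 0 0) (rsubmx z) * (divu u (lsubmx z 0 0) (rsubmx z)) ^+ 3.
Proof.
move=> KE; have divuE w : divu u (lsubmx w 0 0) (rsubmx w) = divU w.
  by apply: eq_bigr => i _; rewrite dx_uncurry.
have KEE : uncurry KE = KEst by apply: funext => w; rewrite /uncurry /KE divuE.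
have fluxE j : uncurry (fun s y => (KE s y + Sig s y) * u s y 0 j)
    = (fun w => (KEst w + S w) * U j w).
  by apply: funext => w; rewrite /uncurry /KE divuE.
have dKE := differentiable_kinetic_energy Dz.
under eq_bigr => j _ do rewrite dx_uncurry fluxE
  (derive_mulf (differentiableD dKE (dS z Dz)) (dU j z Dz))
  (derive_addf dKE (dS z Dz)) (derive_kinetic_energy Dz).
rewrite dt_uncurry KEE divuE (derive_kinetic_energy Dz).
exact: (energy_balance_alg alpha (P z) ('D_tdir P z) (S z) (divU z) ('D_tdir divU z)
  (fun j => U j z) (fun j => 'D_(xdir j) P z) (fun j => 'D_(xdir j) S z)
  (fun i => 'D_tdir (U i) z) (fun j => 'D_(xdir j) divU z) (fun i j => 'D_(xdir j) (U i) z)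
  (density_neq0 Dz) erefl (mass_spacetime Dz) (velocity_transport Dz)
  (igr_divergence_transport Dz)).
Qed.

End PressurelessIGR.

Theorem mainTheorem9 (R : realType) (d : nat) (I : set R) (Om : set 'rV[R]_d)
  (alpha : R) (rho Sig : R -> 'rV[R]_d -> R)
  (u : R -> 'rV[R]_d -> 'rV[R]_d) :
  open I -> open Om -> 0 < alpha ->
  smooth_on (stdom I Om) (uncurry rho) ->
  smooth_on (stdom I Om) (uncurry Sig) ->
  (forall i : 'I_d, smooth_on (stdom I Om) (uncurry (fun s y => u s y 0 i))) ->
  (forall t x, I t -> Om x -> 0 < rho t x) ->
  (* mass *)
  (forall t x, I t -> Om x ->
     dt rho t x + \sum_(j < d) dx j (fun s y => rho s y * u s y 0 j) t x = 0) ->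
  (* momentum *)
  (forall t x, I t -> Om x -> forall i : 'I_d,
     dt (fun s y => rho s y * u s y 0 i) t x
     + \sum_(j < d) dx j (fun s y => rho s y * u s y 0 i * u s y 0 j
                                      + (i == j)%:R * Sig s y) t x = 0) ->
  (* IGR equation for Sigma *)
  (forall t x, I t -> Om x ->
     (rho t x)^-1 * Sig t x
     - alpha * \sum_(j < d) dx j (fun s y => (rho s y)^-1 * dx j Sig s y) t x
     = alpha * ((\tr (gradu u t x)) ^+ 2 + \tr (gradu u t x *m gradu u t x))) ->
  let KE := fun s y => 2^-1 * rho s y *
              (\sum_(i < d) (u s y 0 i) ^+ 2 + alpha * (divu u s y) ^+ 2) in
  forall t x, I t -> Om x ->
    dt KE t x + \sum_(j < d) dx j (fun s y => (KE s y + Sig s y) * u s y 0 j) t x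
    = alpha * rho t x * (divu u t x) ^+ 3.
Proof.
(* The identity holds for every alpha. *)
move=> oI oOm _ rho_sm Sig_sm u_sm rho_pos mass mom igr KE t x It Ox.
pose z : 'rV[R]_(1 + d) := row_mx t%:M x.
have zt : lsubmx z 0 0 = t by rewrite row_mxKl mxE eqxx mulr1n.
have zx : rsubmx z = x by rewrite row_mxKr.
have Dz : stdom I Om z by split; rewrite /= ?zt ?zx.
rewrite -zt -zx.
exact (kinetic_energy_balance (open_stdom oI oOm) rho_sm Sig_sm u_sm rho_pos
  mass mom igr Dz).
Qed.
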